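(* Let $M,N\in\mathbf K_{\rm fnq}$ with $M\le_2N$, and let $c\in Q^M$ and $a\in P^M$. Then the equivalence class $a/E^N_c$ is included in $M$.
   Context: $\mathbf K_{\rm fnq}$ is the class of structures $M$ in the vocabulary consisting of unary predicates $P,Q$, a ternary relation $E$, and $n$-ary relations $Q_{n,k}$ ($n,k\ge1$), such that: (a) $P^M,Q^M$ partition the universe of $M$ and $P^M\neq\emptyset$; (b) $E^M\subseteq P^M\times P^M\times Q^M$, written $aE^M_cb$ for $(a,b,c)\in E^M$; (c) for $c\in Q^M$, $E^M_c$ is an equivalence relation on $P^M$ with $\sup\{|a/E^M_c|:a\in P^M\}$ finite; (d) $Q^M_{n,k}\subseteq(Q^M)^n$; (e) for $\bar c=\langle c_\ell:\ell<n\rangle\in{}^n(Q^M)$, $E^M_{\bar c}$ is the equivalence relation on $P^M$ generated by $\bigcup_\ell E^M_{c_\ell}$; (f) ${}^n(Q^M)=\bigcup_{k\ge1}Q^M_{n,k}$; (g) if $\bar c\in Q^M_{n,k}$ then $|a/E^M_{\bar c}|\le k$ for all $a\in P^M$. For $M,N\in\mathbf K_{\rm fnq}$: $M\le_2N$ iff $M$ is a substructure of $N$ and for every finite $A\subseteq N$ there is a one-to-one homomorphism from $N{\restriction}A$ into $M$ which is the identity on $A\cap M$. *)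

From Stdlib Require Import List Relations.
Import ListNotations.

(* A structure in the vocabulary: a carrier with unary P, Q, ternary E
   ((a,b,c) in E written a E_c b, encoded as SE a b c), and the relations
   Q_{n,k} encoded as SQnk n k : list car -> Prop (only n,k >= 1 matter). *)
Record Str := {
  car : Type;
  SP : car -> Prop;
  SQ : car -> Prop;
  SE : car -> car -> car -> Prop;
  SQnk : nat -> nat -> list car -> Prop
}.

Definition card_le {U : Type} (S : U -> Prop) (k : nat) : Prop :=
  forall l : list U, NoDup l -> (forall x, In x l -> S x) -> length l <= k.

(* E_{cbar}: the equivalence relation on P^M generated by the union of the E_{c_l}. *)
Definition Egen (M : Str) (cs : list (car M)) : relation (car M) :=
  fun x y =>
    (SP M x /\ x = y) \/
    clos_trans (car M)
      (fun u v => exists c, In c cs /\ (SE M u v c \/ SE M v u c)) x y.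

Definition equiv_on {U : Type} (D : U -> Prop) (R : relation U) : Prop :=
  (forall x y, R x y -> D x /\ D y) /\
  (forall x, D x -> R x x) /\
  (forall x y, R x y -> R y x) /\
  (forall x y z, R x y -> R y z -> R x z).

Definition in_Kfnq (M : Str) : Prop :=
  (forall x, SP M x \/ SQ M x) /\ (forall x, ~ (SP M x /\ SQ M x)) /\
  (exists x, SP M x) /\
  (forall a b c, SE M a b c -> SP M a /\ SP M b /\ SQ M c) /\
  (forall c, SQ M c ->
     equiv_on (SP M) (fun a b => SE M a b c) /\
     exists B, forall a, SP M a -> card_le (fun b => SE M a b c) B) /\
  (forall n k l, 1 <= n -> 1 <= k -> SQnk M n k l ->
     length l = n /\ forall x, In x l -> SQ M x) /\
  (* (e) is built into the definition Egen; (f) *)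
  (forall n l, 1 <= n -> length l = n -> (forall x, In x l -> SQ M x) ->
     exists k, 1 <= k /\ SQnk M n k l) /\
  (forall n k l, 1 <= n -> 1 <= k -> SQnk M n k l ->
     forall a, SP M a -> card_le (fun b => Egen M l a b) k).

Definition substr (M N : Str) (i : car M -> car N) : Prop :=
  (forall x y, i x = i y -> x = y) /\
  (forall x, SP M x <-> SP N (i x)) /\
  (forall x, SQ M x <-> SQ N (i x)) /\
  (forall x y z, SE M x y z <-> SE N (i x) (i y) (i z)) /\
  (forall n k l, 1 <= n -> 1 <= k -> (SQnk M n k l <-> SQnk N n k (map i l))).

Definition le2 (M N : Str) (i : car M -> car N) : Prop :=
  substr M N i /\
  forall A : list (car N),
    exists h : car N -> car M,
      (forall x y, In x A -> In y A -> h x = h y -> x = y) /\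
      (forall x, In x A -> SP N x -> SP M (h x)) /\
      (forall x, In x A -> SQ N x -> SQ M (h x)) /\
      (forall x y z, In x A -> In y A -> In z A ->
         SE N x y z -> SE M (h x) (h y) (h z)) /\
      (forall n k l, 1 <= n -> 1 <= k -> (forall x, In x l -> In x A) ->
         SQnk N n k l -> SQnk M n k (map h l)) /\
      (forall m, In (i m) A -> h (i m) = m).

(** The class of [a] under [E^M_c] is finite, so it is listed by some [L].  The
    embedding of [N] restricted to the finite set [{b, a, c} ∪ L] into [M] maps
    [b] into the class of [a], i.e. onto some [m ∈ L]; as it also fixes [m], its
    injectivity on that set forces [b = i m]. *)
From Stdlib Require Import List Relations Classical Lia.
Import ListNotations.

Lemma card_le_covered {U : Type} (X : U -> Prop) (B : nat) :
  card_le X B -> exists l, forall x, X x -> In x l.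
Proof.
  intro HB. apply NNPP; intro Huncovered.
  assert (Hlong : forall n, exists l,
             NoDup l /\ (forall x, In x l -> X x) /\ length l = n).
  { induction n as [|n [l [Hnd [HlX Hlen]]]].
    - exists []. repeat split; [constructor | intros x []].
    - assert (Hnew : exists x, X x /\ ~ In x l).
      { apply NNPP; intro Hnone. apply Huncovered. exists l.
        intros x Xx. apply NNPP; intro Hx. apply Hnone. eauto. }
      destruct Hnew as [x [Xx Hx]].
      exists (x :: l). repeat split.
      + constructor; assumption.
      + intros y [<- | Hy]; auto.
      + simpl; lia. }
  destruct (Hlong (B + 1)) as [l [Hnd [HlX Hlen]]].
  specialize (HB l Hnd HlX). lia.
Qed.

Lemma Kfnq_class_covered (M : Str) (c a : car M) :
  in_Kfnq M -> SQ M c -> SP M a ->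
  exists L, forall m, SE M a m c -> In m L.
Proof.
  intros (_ & _ & _ & _ & Hclass & _) Hc Ha.
  destruct (Hclass c Hc) as [_ [B HB]].
  exact (card_le_covered _ _ (HB a Ha)).
Qed.

Lemma le2_class_in_image (M N : Str) (i : car M -> car N) (c a : car M)
    (L : list (car M)) :
  le2 M N i -> (forall m, SE M a m c -> In m L) ->
  forall b : car N, SE N (i a) b (i c) -> exists m : car M, i m = b.
Proof.
  intros [_ Hemb] HL b Hb.
  destruct (Hemb (b :: i a :: i c :: map i L))
    as (h & Hinj & _ & _ & HE & _ & Hfix).
  assert (HiL : forall m, In m L -> In (i m) (b :: i a :: i c :: map i L)).
  { intros m Hm. simpl. right; right; right. apply in_map; assumption. }
  assert (Hha : h (i a) = a) by (apply Hfix; simpl; auto).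
  assert (Hhc : h (i c) = c) by (apply Hfix; simpl; auto).
  assert (Hhb : In (h b) L).
  { apply HL. rewrite <- Hha, <- Hhc. apply HE; simpl; auto. }
  exists (h b). symmetry. apply Hinj.
  - simpl; auto.
  - apply HiL; assumption.
  - symmetry. apply Hfix, HiL; assumption.
Qed.

Theorem claim3p3 (M N : Str) (i : car M -> car N) :
  in_Kfnq M -> in_Kfnq N -> le2 M N i ->
  forall (c a : car M), SQ M c -> SP M a ->
  forall b : car N, SE N (i a) b (i c) -> exists m : car M, i m = b.
Proof.
  intros HM _ Hle c a Hc Ha.
  destruct (Kfnq_class_covered M c a HM Hc Ha) as [L HL].
  exact (le2_class_in_image M N i c a L Hle HL).
Qed.
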